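(* For every $A\in\mathcal{B}$ we have $\det(A)=(-t)^k$ for some integer $k$. In particular, $\overline{\rho}(\mathcal{B})=\mathrm{PSL}(2,\mathbb{Z})$.
   Context: For a matrix $A$ with Laurent polynomial entries, $\overline{A}$ denotes the matrix obtained by substituting $t\mapsto t^{-1}$ in every entry. Let $J_3=\begin{pmatrix}1&-t^{-1}&-t^{-1}\\-t&1&-t^{-1}\\-t&-t&1\end{pmatrix}$, $v=(t,t^2,t^3)$ (a row vector) and $\vec{1}=(1,1,1)^T$. The formal Burau group is $\mathcal{B}=\{A\in\mathrm{GL}(3,\mathbb{Z}[t,t^{-1}]) : vA=v,\ A\vec 1=\vec 1,\ \overline{A}J_3A^T=J_3\}$. For $A\in\mathcal{B}$, let $B=A|_{t=-1}\in\mathrm{GL}(3,\mathbb{Z})$ and $\rho(B)=\begin{pmatrix}1-B_{13}&1-B_{11}\\1-B_{33}&1-B_{31}\end{pmatrix}\in\mathrm{GL}(2,\mathbb{Z})$; $\overline{\rho}(A)$ is the image of $\rho(B)$ in $\mathrm{PGL}(2,\mathbb{Q}(t))$ (quotient by nonzero scalars), and $\mathrm{PSL}(2,\mathbb{Z})$ is identified with the image of $\mathrm{SL}(2,\mathbb{Z})$ there. *)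

From HB Require Import structures.
From mathcomp Require Import all_boot all_order all_algebra.
From mathcomp Require Import fraction generic_quotient.
Set Implicit Arguments. Unset Strict Implicit. Unset Printing Implicit Defensive.
Import Order.TTheory GRing.Theory Num.Theory.
Local Open Scope ring_scope.

Notation K := {fraction {poly rat}}.
Definition tK : K := tofrac 'X.

Definition polyK (p : {poly int}) : K := tofrac (map_poly (fun z : int => z%:~R) p).

Definition laurent (x : K) : Prop :=
  exists (n : nat) (p : {poly int}), x = polyK p / tK ^+ n.

(* The substitution t |-> t^-1 on Q(t) (a field automorphism):
   p/q |-> p(t^-1)/q(t^-1), computed on a representative of the fraction. *)
Definition subst_inv (p : {poly rat}) : K := (map_poly (fun c : rat => tofrac (c%:P)) p).[tK^-1].
Definition barK (x : K) : K :=
  subst_inv (\n_(repr x)) / subst_inv (\d_(repr x)).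
Definition barmx m n (A : 'M[K]_(m, n)) : 'M[K]_(m, n) := map_mx barK A.

(* Evaluation of a Laurent polynomial at t = -1 (relational form):
   x = p(t)/t^n evaluates to p(-1)/(-1)^n = (-1)^n p(-1). *)
Definition eval_m1 (x : K) (z : int) : Prop :=
  exists (n : nat) (p : {poly int}),
    x = polyK p / tK ^+ n /\ z = (-1) ^+ n * p.[-1].
Definition eval_m1_mx m n (A : 'M[K]_(m, n)) (B : 'M[int]_(m, n)) : Prop :=
  forall i j, eval_m1 (A i j) (B i j).

Definition i1 : 'I_3 := @Ordinal 3 0 isT.
Definition i2 : 'I_3 := @Ordinal 3 1 isT.
Definition i3 : 'I_3 := @Ordinal 3 2 isT.

Definition J3 : 'M[K]_3 :=
  \matrix_(i < 3, j < 3)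
    (if i == j then 1 else if (i < j)%N then - tK^-1 else - tK).

Definition vK : 'rV[K]_3 := \row_(j < 3) tK ^+ j.+1.
Definition ones : 'cV[K]_3 := const_mx 1.

Definition GL3_laurent (A : 'M[K]_3) : Prop :=
  (forall i j, laurent (A i j)) /\
  exists A' : 'M[K]_3, (forall i j, laurent (A' i j)) /\
                       A *m A' = 1%:M /\ A' *m A = 1%:M.

Definition burau (A : 'M[K]_3) : Prop :=
  [/\ GL3_laurent A, vK *m A = vK, A *m ones = ones &
      barmx A *m J3 *m A^T = J3].

Definition rho (B : 'M[int]_3) : 'M[int]_2 :=
  \matrix_(i < 2, j < 2)
    (1 - B (if i == 0 :> nat then i1 else i3) (if j == 0 :> nat then i3 else i1)).

(* Equality in PGL(2, Q(t)) of the images of two integer matrices. *)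
Definition intmxK m n (M : 'M[int]_(m, n)) : 'M[K]_(m, n) :=
  map_mx (fun z : int => z%:~R) M.
Definition proj_eq (M N : 'M[int]_2) : Prop :=
  exists c : K, c != 0 /\ intmxK M = c *: intmxK N.

(* A is invertible over Z[t, t^-1], so det A is a unit there, i.e. +-t^k.  Evaluating
   at t = -1 gives an integer matrix B that fixes the row v(-1) and the column of ones and
   preserves the form N3(-1), where N3 = (J3 - 1 1^T) / (1 + t).  These conditions leave
   four free entries of B, give det B = det rho(B) and force det rho(B) = 1.  So A(-1) has
   determinant 1, which fixes the sign: det A = (-t)^k, and rho lands in SL(2, Z).
   Conversely rho is multiplicative on such B, and the Burau generators sigma1^{+-1},
   sigma2^{+-1} lie in the group and map to the elementary matrices [[1, -+1], [0, 1]] and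
   [[1, 0], [+-1, 1]], which generate SL(2, Z) by Euclid's algorithm. *)

From HB Require Import structures.
From mathcomp Require Import all_boot all_order all_algebra.
From mathcomp Require Import fraction generic_quotient.
From mathcomp Require Import ring zify.
Set Implicit Arguments. Unset Strict Implicit. Unset Printing Implicit Defensive.
Import Order.TTheory GRing.Theory Num.Theory.
Local Open Scope ring_scope.
Local Open Scope quotient_scope.
Local Notation "x %:F" := (@tofrac _ x) (format "x %:F") : ring_scope.

Lemma tK_neq0 : tK != 0.
Proof. by rewrite tofrac_eq0 polyX_eq0. Qed.

Lemma comm_tKV : commr_rmorph (@tofrac {poly rat} \o polyC) tK^-1.
Proof. by move=> c; apply: mulrC. Qed.

HB.instance Definition _ := GRing.RMorphism.copy subst_inv (horner_morph comm_tKV).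

Lemma subst_invX : subst_inv 'X = tK^-1.
Proof. exact: (horner_morphX comm_tKV). Qed.

Lemma subst_inv_rev p :
  subst_inv p * tK ^+ (size p).-1 = (\poly_(i < size p) p`_((size p).-1 - i))%:F.
Proof.
rewrite [subst_inv p]/(horner_morph comm_tKV p) /horner_morph horner_coef.
rewrite size_map_poly mulr_suml poly_def rmorph_sum /=.
rewrite (reindex_inj rev_ord_inj); apply: eq_bigr => i _.
rewrite coef_map /= -mul_polyC rmorphM rmorphXn /= -mulrA -/tK.
have -> : (size p - i.+1 = (size p).-1 - i)%N by lia.
congr (_ * _).
have le_i : (i <= (size p).-1)%N by rewrite -ltnS prednK // (leq_ltn_trans _ (ltn_ord i)).
by rewrite -{2}(subnK le_i) exprD exprVn mulKf // expf_neq0 // tK_neq0.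
Qed.

Lemma subst_inv_eq0 p : (subst_inv p == 0) = (p == 0).
Proof.
have [-> | nz_p] := eqVneq p 0; first by rewrite rmorph0 eqxx.
apply/negbTE/eqP => p0; have /eqP := subst_inv_rev p.
rewrite p0 mul0r eq_sym tofrac_eq0 => /eqP/(congr1 (fun q : {poly rat} => q`_0)).
rewrite coef_poly size_poly_gt0 nz_p subn0 -lead_coefE coef0 => /eqP.
by rewrite lead_coef_eq0 (negPf nz_p).
Qed.

Lemma pi_ratioE (R : idomainType) (r : {ratio R}) :
  \pi_{fraction R} r = (\n_r)%:F / (\d_r)%:F.
Proof.
have nz_d := denom_ratioP r.
apply: (@mulIf _ (\d_r)%:F); first by rewrite tofrac_eq0.
rewrite divfK ?tofrac_eq0 //; unlock tofrac.
transitivity (\pi_{fraction R} (FracField.mulf r (Ratio (\d_r) 1))).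
  by rewrite FracField.pi_mul.
apply/eqmodP; rewrite /= FracField.equivfE /FracField.mulf.
by rewrite !numden_Ratio ?oner_eq0 ?mulf_neq0 ?oner_eq0 // !mulr1 mulrC.
Qed.

Lemma frac_numden (x : K) : x = (\n_(repr x))%:F / (\d_(repr x))%:F.
Proof. by rewrite -pi_ratioE reprK. Qed.

Lemma barK_frac a b : b != 0 -> barK (a%:F / b%:F) = subst_inv a / subst_inv b.
Proof.
move=> nz_b; rewrite /barK; set x := a%:F / b%:F.
have nz_d := denom_ratioP (repr x).
have /eqP := frac_numden x; rewrite {1}/x.
rewrite eqr_div ?tofrac_eq0 // -!tofracM tofrac_eq => /eqP E.
by apply/eqP; rewrite eqr_div ?subst_inv_eq0 // -!rmorphM E.
Qed.

Lemma barK_tofrac a : barK a%:F = subst_inv a.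
Proof. by rewrite -[a%:F]divr1 -tofrac1 barK_frac ?oner_eq0 // rmorph1 divr1. Qed.

Lemma subf_div (F : fieldType) (x1 y1 x2 y2 : F) : y1 != 0 -> y2 != 0 ->
  x1 / y1 - x2 / y2 = (x1 * y2 - x2 * y1) / (y1 * y2).
Proof. by move=> nz_y1 nz_y2; rewrite -mulNr addf_div // mulNr. Qed.

Lemma barK_is_zmod_morphism : zmod_morphism barK.
Proof.
move=> x y; rewrite [x]frac_numden [y]frac_numden.
have nz_b := denom_ratioP (repr x); have nz_d := denom_ratioP (repr y).
rewrite subf_div ?tofrac_eq0 // -!tofracM -tofracB !barK_frac ?mulf_neq0 //.
by rewrite subf_div ?subst_inv_eq0 // rmorphB !rmorphM.
Qed.

Lemma barK_is_monoid_morphism : monoid_morphism barK.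
Proof.
split=> [|x y]; first by rewrite barK_tofrac rmorph1.
rewrite [x]frac_numden [y]frac_numden.
have nz_b := denom_ratioP (repr x); have nz_d := denom_ratioP (repr y).
rewrite mulf_div -!tofracM !barK_frac ?mulf_neq0 //.
by rewrite !rmorphM mulf_div.
Qed.

HB.instance Definition _ := GRing.isZmodMorphism.Build K K barK barK_is_zmod_morphism.
HB.instance Definition _ := GRing.isMonoidMorphism.Build K K barK barK_is_monoid_morphism.

Lemma barK_tK : barK tK = tK^-1.
Proof. by rewrite barK_tofrac subst_invX. Qed.

HB.instance Definition _ :=
  GRing.RMorphism.copy polyK (@tofrac {poly rat} \o map_poly (intr : int -> rat)).

Lemma polyKC z : polyK z%:P = z%:~R.
Proof. by rewrite -[z in z%:P]intz !rmorph_int. Qed.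

Lemma polyKX : polyK 'X = tK.
Proof. by rewrite [polyK _]/((@tofrac _ \o map_poly (intr : int -> rat)) 'X) /= map_polyX. Qed.

Lemma polyK_inj : injective polyK.
Proof.
move=> p q /eqP; rewrite tofrac_eq => /eqP.
by apply: map_inj_poly => //; apply: intr_inj.
Qed.

Lemma polyK_coef p : polyK p = \sum_(i < size p) (p`_i)%:~R * tK ^+ i.
Proof.
rewrite -{1}[p]coefK poly_def rmorph_sum; apply: eq_bigr => i _.
by rewrite -mul_polyC rmorphM /= polyKC rmorphXn /= polyKX.
Qed.

Lemma sign_nat_cases (n : nat) : (-1 : int) ^+ n = 1 \/ (-1 : int) ^+ n = -1.
Proof. by rewrite -signr_odd; case: (odd n); [right | left]. Qed.

Lemma eval_m1_uniq {x z w} : eval_m1 x z -> eval_m1 x w -> z = w.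
Proof.
move=> [n [p [-> ->]]] [m [q [E ->]]].
move/eqP: E; rewrite eqr_div ?expf_neq0 ?tK_neq0 //.
rewrite -polyKX -!rmorphXn -!rmorphM => /eqP/polyK_inj.
move/(congr1 (horner^~ (-1))); rewrite !hornerM !hornerXn.
move: p.[-1] q.[-1] => P Q.
by case: (sign_nat_cases n) => ->; case: (sign_nat_cases m) => ->; lia.
Qed.

Lemma eval_m1M {x y z w} : eval_m1 x z -> eval_m1 y w -> eval_m1 (x * y) (z * w).
Proof.
move=> [n [p [-> ->]]] [m [q [-> ->]]]; exists (n + m)%N, (p * q).
by rewrite rmorphM !exprD mulf_div hornerM; split=> //; ring.
Qed.

Lemma eval_m1D {x y z w} : eval_m1 x z -> eval_m1 y w -> eval_m1 (x + y) (z + w).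
Proof.
move=> [n [p [-> ->]]] [m [q [-> ->]]].
exists (n + m)%N, (p * 'X^m + q * 'X^n); split.
  rewrite addf_div ?expf_neq0 ?tK_neq0 // exprD.
  by rewrite rmorphD !rmorphM !rmorphXn /= polyKX.
rewrite hornerD !hornerM !hornerXn exprD.
move: p.[-1] q.[-1] => P Q.
by case: (sign_nat_cases n) => ->; case: (sign_nat_cases m) => ->; lia.
Qed.

Lemma eval_m1_int (z : int) : eval_m1 z%:~R z.
Proof.
by exists 0%N, z%:P; rewrite polyKC !expr0 divr1 hornerC mul1r.
Qed.

Lemma eval_m1_0 : eval_m1 0 0.
Proof. exact: eval_m1_int 0. Qed.

Lemma eval_m1_1 : eval_m1 1 1.
Proof. exact: eval_m1_int 1. Qed.

Lemma eval_m1N {x z} : eval_m1 x z -> eval_m1 (- x) (- z).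
Proof. by move/(eval_m1M (eval_m1_int (-1))); rewrite !mulN1r. Qed.

Lemma eval_m1_tK : eval_m1 tK (-1).
Proof. by exists 0%N, 'X; rewrite !expr0 divr1 polyKX hornerX mul1r. Qed.

Lemma eval_m1_tKV : eval_m1 tK^-1 (-1).
Proof. by exists 1%N, 1; rewrite rmorph1 mul1r !expr1 hornerC mulr1. Qed.

Lemma eval_m1_sum (I : Type) (r : seq I) (P : pred I) F G :
  (forall i, P i -> eval_m1 (F i) (G i)) ->
  eval_m1 (\sum_(i <- r | P i) F i) (\sum_(i <- r | P i) G i).
Proof. by move=> FG; apply: (big_ind2 eval_m1) => // *; [apply: eval_m1_0 | apply: eval_m1D]. Qed.

Lemma eval_m1_prod (I : Type) (r : seq I) (P : pred I) F G :
  (forall i, P i -> eval_m1 (F i) (G i)) ->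
  eval_m1 (\prod_(i <- r | P i) F i) (\prod_(i <- r | P i) G i).
Proof. by move=> FG; apply: (big_ind2 eval_m1) => // *; [apply: eval_m1_1 | apply: eval_m1M]. Qed.

Lemma eval_m1X {x z} n : eval_m1 x z -> eval_m1 (x ^+ n) (z ^+ n).
Proof.
by move=> xz; elim: n => [|n IHn]; rewrite ?expr0 ?exprS; [apply: eval_m1_1 | apply: eval_m1M].
Qed.

(* t and t^-1 both evaluate to -1, so the involution does not change the value at -1. *)
Lemma eval_m1_bar {x z} : eval_m1 x z -> eval_m1 (barK x) z.
Proof.
move=> [n [p [-> ->]]].
rewrite fmorph_div /= rmorphXn /= barK_tK exprVn invrK mulrC polyK_coef.
apply: eval_m1M; first exact: eval_m1X eval_m1_tK.
rewrite rmorph_sum horner_coef; apply: eval_m1_sum => i _.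
rewrite rmorphM /= rmorph_int rmorphXn /= barK_tK.
by apply: eval_m1M; [apply: eval_m1_int | exact: eval_m1X eval_m1_tKV].
Qed.

Lemma eval_m1_laurent {x z} : eval_m1 x z -> laurent x.
Proof. by move=> [n [p [-> _]]]; exists n, p. Qed.

Lemma laurent_eval_m1 {x} : laurent x -> exists z, eval_m1 x z.
Proof. by move=> [n [p ->]]; exists ((-1) ^+ n * p.[-1]), n, p. Qed.

Lemma eval_m1_mxM {m n p} {A : 'M[K]_(m, n)} {B} {C : 'M[K]_(n, p)} {D} :
  eval_m1_mx A B -> eval_m1_mx C D -> eval_m1_mx (A *m C) (B *m D).
Proof. by move=> AB CD i j; rewrite !mxE; apply: eval_m1_sum => k _; apply: eval_m1M. Qed.

Lemma eval_m1_mx_tr {m n} {A : 'M[K]_(m, n)} {B} : eval_m1_mx A B -> eval_m1_mx A^T B^T.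
Proof. by move=> AB i j; rewrite !mxE. Qed.

Lemma eval_m1_mx_bar {m n} {A : 'M[K]_(m, n)} {B} : eval_m1_mx A B -> eval_m1_mx (barmx A) B.
Proof. by move=> AB i j; rewrite mxE; apply: eval_m1_bar. Qed.

Lemma eval_m1_mx_uniq {m n} {A : 'M[K]_(m, n)} {B C} :
  eval_m1_mx A B -> eval_m1_mx A C -> B = C.
Proof. by move=> AB AC; apply/matrixP => i j; apply: eval_m1_uniq (AB i j) (AC i j). Qed.

Lemma eval_m1_mx1 n : eval_m1_mx (1%:M : 'M[K]_n) 1%:M.
Proof. by move=> i j; rewrite !mxE; case: (i == j); [apply: eval_m1_1 | apply: eval_m1_0]. Qed.

Lemma eval_m1_det {n} {A : 'M[K]_n} {B} : eval_m1_mx A B -> eval_m1 (\det A) (\det B).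
Proof.
move=> AB; apply: eval_m1_sum => s _; apply: eval_m1M.
  exact: eval_m1X (eval_m1_int (-1)).
by apply: eval_m1_prod => i _.
Qed.

Lemma laurent_mx_eval_m1 {m n} {A : 'M[K]_(m, n)} :
  (forall i j, laurent (A i j)) -> exists B, eval_m1_mx A B.
Proof.
move=> lA; have [f Af] := fin_all_exists (fun ij => laurent_eval_m1 (lA ij.1 ij.2)).
by exists (\matrix_(i, j) f (i, j)) => i j; rewrite mxE; apply: (Af (i, j)).
Qed.

Lemma laurent_mxM m n p (A : 'M[K]_(m, n)) (C : 'M[K]_(n, p)) :
  (forall i j, laurent (A i j)) -> (forall i j, laurent (C i j)) ->
  forall i j, laurent ((A *m C) i j).
Proof.
move=> lA lC i j; have [B AB] := laurent_mx_eval_m1 lA.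
have [D CD] := laurent_mx_eval_m1 lC.
exact: eval_m1_laurent (eval_m1_mxM AB CD i j).
Qed.

Lemma poly_int_factor_Xn N (p q : {poly int}) : p * q = 'X^N ->
  exists (a : nat) (s : int), (s = 1 \/ s = -1) /\ p = s%:P * 'X^a.
Proof.
elim: N p q => [|N IHN] p q pq.
  have : p \is a GRing.unit by apply/unitrPr; exists q; rewrite pq expr0.
  rewrite poly_unitE => /andP[/eqP size_p u_p0].
  exists 0%N, p`_0; split; last by rewrite expr0 mulr1 {1}[p]size1_polyC ?size_p.
  by move: u_p0 => /orP[/eqP-> | /eqP->]; [left | right].
have nz_X : ('X : {poly int}) != 0 by rewrite polyX_eq0.
move: (congr1 (horner^~ 0) pq); rewrite /= hornerM hornerXn exprS mul0r => /eqP.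
rewrite mulf_eq0 => /orP[/factor_theorem[p' Ep] | /factor_theorem[q' Eq]].
  move: pq; rewrite Ep subr0 mulrAC exprSr => /(mulIf nz_X)/IHN[a [s [s1 ->]]].
  by exists a.+1, s; rewrite exprSr mulrA.
by move: pq; rewrite Eq subr0 mulrA exprSr => /(mulIf nz_X)/IHN.
Qed.

(* The units of Z[t, t^-1] are the +-t^k; the value 1 at t = -1 forces the sign. *)
Lemma laurent_unit_eval_m1 x y : laurent x -> laurent y -> x * y = 1 ->
  eval_m1 x 1 -> exists k : int, x = (- tK) ^ k.
Proof.
move=> [n [p ->]] [m [q ->]] pq x1.
have {pq} /poly_int_factor_Xn[a [s [s1 Ep]]] : p * q = 'X^(n + m).
  apply: polyK_inj; move/(congr1 ( *%R^~ (tK ^+ (n + m)))): pq.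
  by rewrite mulf_div -rmorphM -exprD divfK ?expf_neq0 ?tK_neq0 // mul1r rmorphXn /= polyKX.
have : eval_m1 (polyK p / tK ^+ n) ((-1) ^+ n * (s * (-1) ^+ a)).
  by exists n, p; rewrite Ep hornerM hornerC hornerXn.
move=> /(eval_m1_uniq x1) sE.
rewrite Ep; have {sE} -> : s = (-1) ^+ (a + n).
  move: sE; rewrite exprD.
  by case: (sign_nat_cases n) => ->; case: (sign_nat_cases a) => ->; case: s1 => ->; lia.
exists (a%:Z - n%:Z); rewrite expfzDr ?oppr_eq0 ?tK_neq0 // -exprnN.
rewrite rmorphM /= polyKC rmorphXn /= rmorphN1 rmorphXn /= polyKX.
by rewrite -exprnP !(exprNn tK) exprD invr_signM mulrACA mulrA.
Qed.

(* J3 evaluates to 1 1^T at t = -1, which carries no information; N3 = (J3 - 1 1^T) / (1 + t)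
   keeps the information. *)
Definition N3 : 'M[K]_3 :=
  \matrix_(i, j) (if i == j then 0 else if (i < j)%N then - tK^-1 else -1).

Lemma J3_decomp : J3 = ones *m ones^T + (1 + tK) *: N3.
Proof.
apply/matrixP => i j; rewrite !mxE big_ord1 !mxE mul1r.
case: (i == j); first by rewrite mulr0 addr0.
by case: (i < j)%N; [rewrite mulrN mulrDl mul1r mulfV ?tK_neq0 //; ring | ring].
Qed.

Lemma add1_tK_neq0 : 1 + tK != 0.
Proof.
rewrite -tofrac1 -tofracD tofrac_eq0; apply/eqP => /(congr1 (fun p : {poly rat} => p`_1)).
by rewrite coefD coef1 coefX coef0.
Qed.

Lemma burau_N3 A : burau A -> barmx A *m N3 *m A^T = N3.
Proof.
case=> _ _ A1 /eqP; rewrite J3_decomp mulmxDr mulmxDl !mulmxA.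
have bar_ones : barmx ones = ones by apply/matrixP => i j; rewrite !mxE rmorph1.
have -> : barmx A *m ones = ones by rewrite -[in LHS]bar_ones -map_mxM A1.
rewrite -(mulmxA ones) -trmx_mul A1 -scalemxAr -scalemxAl.
by rewrite addrC [X in _ == X]addrC (inj_eq (addIr _)) (inj_eq (scalerI add1_tK_neq0)) => /eqP.
Qed.

(* Entries indexed by natural numbers, so that concrete computations do not
   depend on ordinal proof terms. *)
Definition ent (R : Type) n (A : 'M[R]_n.+1) (i j : nat) : R := A (inord i) (inord j).

Lemma entE (R : Type) n (A : 'M[R]_n.+1) (i j : 'I_n.+1) : A i j = ent A i j.
Proof. by rewrite /ent !inord_val. Qed.

Lemma matrix_entP (R : Type) n (A B : 'M[R]_n.+1) :
  (forall i j, (i <= n)%N -> (j <= n)%N -> ent A i j = ent B i j) -> A = B.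
Proof. by move=> AB; apply/matrixP => i j; rewrite !entE; apply: AB; rewrite -ltnS. Qed.

Ltac entrywise :=
  let i := fresh "i" in let j := fresh "j" in
  let hi := fresh "hi" in let hj := fresh "hj" in
  apply: matrix_entP => i j hi hj;
  do ![case: i hi => [|i] hi //]; do ![case: j hj => [|j] hj //].

Definition seqmx (R : zmodType) n (l : seq (seq R)) : 'M[R]_n :=
  \matrix_(i, j) (nth [::] l i)`_j.

Lemma ent_seqmx (R : zmodType) n (l : seq (seq R)) i j :
  (i <= n)%N -> (j <= n)%N -> ent (seqmx n.+1 l) i j = (nth [::] l i)`_j.
Proof. by move=> hi hj; rewrite /ent mxE !inordK. Qed.

Lemma ent_mulmx (R : pzRingType) n (A B : 'M[R]_n.+1) i j :
  (i <= n)%N -> (j <= n)%N -> ent (A *m B) i j = \sum_(k < n.+1) ent A i k * ent B k j.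
Proof. by move=> hi hj; rewrite {1}/ent mxE; apply: eq_bigr => k _; rewrite !entE !inordK. Qed.

Lemma ent_tr (R : Type) n (A : 'M[R]_n.+1) i j : ent A^T i j = ent A j i.
Proof. by rewrite /ent mxE. Qed.

Lemma ent1 (R : pzRingType) n i j : (i <= n)%N -> (j <= n)%N ->
  ent (1%:M : 'M[R]_n.+1) i j = (i == j)%:R.
Proof. by move=> hi hj; rewrite /ent mxE -val_eqE /= !inordK. Qed.

Lemma det2 (R : comPzRingType) (A : 'M[R]_2) :
  \det A = ent A 0 0 * ent A 1 1 - ent A 0 1 * ent A 1 0.
Proof.
rewrite (expand_det_row _ 0) !big_ord_recr big_ord0 /= add0r /cofactor !det_mx11 !mxE /=.
by rewrite !entE /= /bump /=; ring.
Qed.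

Lemma det3 (R : comPzRingType) (A : 'M[R]_3) :
  \det A = ent A 0 0 * (ent A 1 1 * ent A 2 2 - ent A 1 2 * ent A 2 1)
         - ent A 0 1 * (ent A 1 0 * ent A 2 2 - ent A 1 2 * ent A 2 0)
         + ent A 0 2 * (ent A 1 0 * ent A 2 1 - ent A 1 1 * ent A 2 0).
Proof.
rewrite (expand_det_row _ 0) !big_ord_recr big_ord0 /= add0r /cofactor !det2.
by rewrite /ent !mxE !entE /= !inordK //= /bump /=; ring.
Qed.

Definition v_m1 : 'rV[int]_3 := \row_(j < 3) (-1) ^+ j.+1.
Definition ones_int : 'cV[int]_3 := const_mx 1.

Lemma eval_m1_vK : eval_m1_mx vK v_m1.
Proof. by move=> i j; rewrite !mxE; apply: eval_m1X eval_m1_tK. Qed.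

Lemma eval_m1_ones : eval_m1_mx ones ones_int.
Proof. by move=> i j; rewrite !mxE; apply: eval_m1_1. Qed.

Definition N3_m1 : 'M[int]_3 := seqmx 3 [:: [:: 0; 1; 1]; [:: -1; 0; 1]; [:: -1; -1; 0]].

Lemma eval_m1_N3 : eval_m1_mx N3 N3_m1.
Proof.
have eval_m1_N1 : eval_m1 (-1) (-1) := eval_m1N eval_m1_1.
have eval_m1_NtKV : eval_m1 (- tK^-1) 1 by rewrite -[1]opprK; apply: eval_m1N eval_m1_tKV.
move=> i j; rewrite !mxE.
by case: i j => [[|[|[|?]]] ?] [[|[|[|?]]] ?] //=; apply: eval_m1_0.
Qed.

Definition int_burau (B : 'M[int]_3) : Prop :=
  [/\ v_m1 *m B = v_m1, B *m ones_int = ones_int & B *m N3_m1 *m B^T = N3_m1].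

Lemma burau_eval_m1 A B : burau A -> eval_m1_mx A B -> int_burau B.
Proof.
move=> bA AB; have [_ vA A1 _] := bA; split.
- by apply: eval_m1_mx_uniq (eval_m1_mxM eval_m1_vK AB) _; rewrite vA; apply: eval_m1_vK.
- by apply: eval_m1_mx_uniq (eval_m1_mxM AB eval_m1_ones) _; rewrite A1; apply: eval_m1_ones.
- apply: eval_m1_mx_uniq (eval_m1_mxM (eval_m1_mxM (eval_m1_mx_bar AB) eval_m1_N3)
    (eval_m1_mx_tr AB)) _.
  by rewrite burau_N3 //; apply: eval_m1_N3.
Qed.

Lemma int_affine_eqs (B : 'M[int]_3) : v_m1 *m B = v_m1 -> B *m ones_int = ones_int ->
  (forall j, (j <= 2)%N -> - ent B 0 j + ent B 1 j - ent B 2 j = (-1) ^+ j.+1) /\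
  (forall i, (i <= 2)%N -> ent B i 0 + ent B i 1 + ent B i 2 = 1).
Proof.
move=> /rowP vB /colP B1; split=> [j hj | i hi].
  move: (vB (inord j)); rewrite !mxE !big_ord_recr big_ord0 /= !mxE !entE /= inordK //.
  by move=> <-; ring.
move: (B1 (inord i)); rewrite !mxE !big_ord_recr big_ord0 /= !mxE !entE /= inordK //.
by move=> <-; ring.
Qed.

(* The row and column conditions leave four free entries, which are those read by rho. *)
Lemma int_affineE (B : 'M[int]_3) : v_m1 *m B = v_m1 -> B *m ones_int = ones_int ->
  B = seqmx 3
    [:: [:: ent B 0 0; 1 - ent B 0 0 - ent B 0 2; ent B 0 2];
        [:: -1 + ent B 0 0 + ent B 2 0; 3 - ent B 0 0 - ent B 0 2 - ent B 2 0 - ent B 2 2;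
            -1 + ent B 0 2 + ent B 2 2];
        [:: ent B 2 0; 1 - ent B 2 0 - ent B 2 2; ent B 2 2]].
Proof.
move=> vB B1; have [v o] := int_affine_eqs vB B1.
move: (v 0%N isT) (v 1%N isT) (v 2%N isT) (o 0%N isT) (o 2%N isT).
rewrite !exprS !expr0 => *; entrywise; rewrite ent_seqmx //=; lia.
Qed.

Lemma ent_rho (B : 'M[int]_3) i j : (i <= 1)%N -> (j <= 1)%N ->
  ent (rho B) i j = 1 - ent B (if i == 0%N then 0 else 2) (if j == 0%N then 2 else 0).
Proof. by move=> hi hj; rewrite /ent mxE !inordK // entE; case: eqP; case: eqP. Qed.

Lemma int_affine_det (B : 'M[int]_3) : v_m1 *m B = v_m1 -> B *m ones_int = ones_int ->
  \det B = \det (rho B).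
Proof.
move=> vB B1; rewrite [in LHS](int_affineE vB B1) det3 det2 !ent_rho // !ent_seqmx //=.
ring.
Qed.

Lemma int_burau_rho_det B : int_burau B -> \det (rho B) = 1.
Proof.
case=> vB B1 BN; rewrite det2 !ent_rho //=.
rewrite (int_affineE vB B1) in BN.
move: (ent B 0 0) (ent B 0 2) (ent B 2 0) (ent B 2 2) BN => a c e f.
move/(congr1 (fun M => ent M 0 1)).
rewrite !ent_mulmx // !big_ord_recr !big_ord0 /= !ent_mulmx //= !big_ord_recr !big_ord0 /=.
by rewrite !ent_tr !ent_seqmx //= => E; rewrite -[RHS]E; ring.
Qed.

Lemma int_burau_det B : int_burau B -> \det B = 1.
Proof. by move=> bB; have [vB B1 _] := bB; rewrite int_affine_det // int_burau_rho_det. Qed.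

Lemma burau_det A : burau A -> exists k : int, \det A = (- tK) ^ k.
Proof.
move=> bA; have [[lA [A' [lA' [AA' _]]]] _ _ _] := bA.
have [B AB] := laurent_mx_eval_m1 lA; have [B' AB'] := laurent_mx_eval_m1 lA'.
apply: (@laurent_unit_eval_m1 _ (\det A')).
- exact: eval_m1_laurent (eval_m1_det AB).
- exact: eval_m1_laurent (eval_m1_det AB').
- by rewrite -det_mulmx AA' det1.
- by rewrite -(int_burau_det (burau_eval_m1 bA AB)); apply: eval_m1_det.
Qed.

Lemma laurent_mx1 n : forall i j, laurent ((1%:M : 'M[K]_n) i j).
Proof. by move=> i j; apply: eval_m1_laurent (eval_m1_mx1 i j). Qed.

Lemma burau1 : burau 1%:M.
Proof.
have l1 := @laurent_mx1 3.
split; [by split=> //; exists 1%:M; rewrite mulmx1 | exact: mulmx1 | exact: mul1mx |].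
by rewrite /barmx map_mx1 mul1mx trmx1 mulmx1.
Qed.

Lemma burauM A C : burau A -> burau C -> burau (A *m C).
Proof.
case=> [[lA [A' [lA' [AA' A'A]]]] vA A1 JA] [[lC [C' [lC' [CC' C'C]]]] vC C1 JC].
split; last by rewrite /barmx map_mxM trmx_mul !mulmxA -(mulmxA _ _ J3) -(mulmxA _ _ C^T) JC JA.
- split; first exact: laurent_mxM.
  exists (C' *m A'); split; first exact: laurent_mxM.
  by rewrite !mulmxA -(mulmxA A) CC' mulmx1 AA' -(mulmxA C') A'A mulmx1 C'C.
- by rewrite mulmxA vA vC.
- by rewrite -mulmxA C1 A1.
Qed.

Lemma burau_inv (A A' : 'M[K]_3) : burau A -> (forall i j, laurent (A' i j)) ->
  A *m A' = 1%:M -> A' *m A = 1%:M -> burau A'.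
Proof.
case=> [[lA _] vA A1 JA] lA' AA' A'A; split.
- by split=> //; exists A.
- by rewrite -{1}vA -mulmxA AA' mulmx1.
- by rewrite -{1}A1 mulmxA A'A mul1mx.
- rewrite -{1}JA !mulmxA /barmx -map_mxM A'A map_mx1 mul1mx -mulmxA -trmx_mul A'A trmx1.
  by rewrite mulmx1.
Qed.

Definition sigma1 (F : fieldType) (t : F) : 'M[F]_3 :=
  seqmx 3 [:: [:: 1 - t; t; 0]; [:: 1; 0; 0]; [:: 0; 0; 1]].
Definition sigma1V (F : fieldType) (t : F) : 'M[F]_3 :=
  seqmx 3 [:: [:: 0; 1; 0]; [:: t^-1; 1 - t^-1; 0]; [:: 0; 0; 1]].
Definition sigma2 (F : fieldType) (t : F) : 'M[F]_3 :=
  seqmx 3 [:: [:: 1; 0; 0]; [:: 0; 1 - t; t]; [:: 0; 1; 0]].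
Definition sigma2V (F : fieldType) (t : F) : 'M[F]_3 :=
  seqmx 3 [:: [:: 1; 0; 0]; [:: 0; 0; 1]; [:: 0; t^-1; 1 - t^-1]].
Definition burau_form (F : fieldType) (t : F) : 'M[F]_3 :=
  seqmx 3 [:: [:: 1; - t^-1; - t^-1]; [:: - t; 1; - t^-1]; [:: - t; - t; 1]].

Ltac entrywise_mul := entrywise;
  rewrite ?ent_mulmx // !big_ord_recr !big_ord0 /= ?ent_mulmx // ?big_ord_recr ?big_ord0 /=;
  rewrite ?ent_tr ?ent1 // !ent_seqmx //=.

Section BurauGenerators.
Variables (F : fieldType) (t : F).
Hypothesis t_neq0 : t != 0.

Lemma sigma1_inv : sigma1 t *m sigma1V t = 1%:M /\ sigma1V t *m sigma1 t = 1%:M.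
Proof. by split; entrywise_mul; field. Qed.

Lemma sigma2_inv : sigma2 t *m sigma2V t = 1%:M /\ sigma2V t *m sigma2 t = 1%:M.
Proof. by split; entrywise_mul; field. Qed.

Lemma sigma1_form : sigma1 t^-1 *m burau_form t *m (sigma1 t)^T = burau_form t.
Proof. by entrywise_mul; field. Qed.

Lemma sigma2_form : sigma2 t^-1 *m burau_form t *m (sigma2 t)^T = burau_form t.
Proof. by entrywise_mul; field. Qed.

Lemma sigma1_row : (\row_(j < 3) t ^+ j.+1) *m sigma1 t = \row_(j < 3) t ^+ j.+1.
Proof.
apply/rowP => j; rewrite !mxE !big_ord_recr big_ord0 /= !mxE.
by case: j => [[|[|[|?]]] ?] //=; ring.
Qed.

Lemma sigma2_row : (\row_(j < 3) t ^+ j.+1) *m sigma2 t = \row_(j < 3) t ^+ j.+1.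
Proof.
apply/rowP => j; rewrite !mxE !big_ord_recr big_ord0 /= !mxE.
by case: j => [[|[|[|?]]] ?] //=; ring.
Qed.

Lemma sigma1_col : sigma1 t *m (const_mx 1 : 'cV[F]_3) = const_mx 1.
Proof.
apply/colP => i; rewrite !mxE !big_ord_recr big_ord0 /= !mxE.
by case: i => [[|[|[|?]]] ?] //=; ring.
Qed.

Lemma sigma2_col : sigma2 t *m (const_mx 1 : 'cV[F]_3) = const_mx 1.
Proof.
apply/colP => i; rewrite !mxE !big_ord_recr big_ord0 /= !mxE.
by case: i => [[|[|[|?]]] ?] //=; ring.
Qed.

End BurauGenerators.

Lemma J3_burau_form : J3 = burau_form tK.
Proof. by apply/matrixP => i j; rewrite !mxE; case: i j => [[|[|[|?]]] ?] [[|[|[|?]]] ?] //=. Qed.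

Lemma barmx_sigma1 : barmx (sigma1 tK) = sigma1 tK^-1.
Proof.
apply/matrixP => i j; rewrite !mxE.
by case: i j => [[|[|[|?]]] ?] [[|[|[|?]]] ?] //=;
  rewrite ?rmorphB /= ?rmorph0 ?rmorph1 ?barK_tK.
Qed.

Lemma barmx_sigma2 : barmx (sigma2 tK) = sigma2 tK^-1.
Proof.
apply/matrixP => i j; rewrite !mxE.
by case: i j => [[|[|[|?]]] ?] [[|[|[|?]]] ?] //=;
  rewrite ?rmorphB /= ?rmorph0 ?rmorph1 ?barK_tK.
Qed.

Definition sigma1_m1 : 'M[int]_3 := seqmx 3 [:: [:: 2; -1; 0]; [:: 1; 0; 0]; [:: 0; 0; 1]].
Definition sigma1V_m1 : 'M[int]_3 := seqmx 3 [:: [:: 0; 1; 0]; [:: -1; 2; 0]; [:: 0; 0; 1]].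
Definition sigma2_m1 : 'M[int]_3 := seqmx 3 [:: [:: 1; 0; 0]; [:: 0; 2; -1]; [:: 0; 1; 0]].
Definition sigma2V_m1 : 'M[int]_3 := seqmx 3 [:: [:: 1; 0; 0]; [:: 0; 0; 1]; [:: 0; -1; 2]].

Lemma eval_m1_1_sub x : eval_m1 x (-1) -> eval_m1 (1 - x) 2.
Proof. by move=> x_m1; apply: (eval_m1D eval_m1_1 (eval_m1N x_m1)). Qed.

Ltac eval_m1_entrywise :=
  let i := fresh "i" in let j := fresh "j" in move=> i j; rewrite !mxE;
  case: i j => [[|[|[|?]]] ?] [[|[|[|?]]] ?] //=;
  first [ apply: eval_m1_0 | apply: eval_m1_1 | apply: eval_m1_tK | apply: eval_m1_tKV
        | apply: eval_m1_1_sub; first [apply: eval_m1_tK | apply: eval_m1_tKV] ].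

Lemma eval_m1_sigma1 : eval_m1_mx (sigma1 tK) sigma1_m1.
Proof. eval_m1_entrywise. Qed.

Lemma eval_m1_sigma1V : eval_m1_mx (sigma1V tK) sigma1V_m1.
Proof. eval_m1_entrywise. Qed.

Lemma eval_m1_sigma2 : eval_m1_mx (sigma2 tK) sigma2_m1.
Proof. eval_m1_entrywise. Qed.

Lemma eval_m1_sigma2V : eval_m1_mx (sigma2V tK) sigma2V_m1.
Proof. eval_m1_entrywise. Qed.

Lemma eval_m1_mx_laurent m n (A : 'M[K]_(m, n)) B :
  eval_m1_mx A B -> forall i j, laurent (A i j).
Proof. by move=> AB i j; apply: eval_m1_laurent (AB i j). Qed.

Lemma burau_sigma1 : burau (sigma1 tK).
Proof.
have [s1V s1V'] := sigma1_inv tK_neq0.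
split; last by rewrite barmx_sigma1 J3_burau_form (sigma1_form tK_neq0).
- split; first exact: eval_m1_mx_laurent eval_m1_sigma1.
  by exists (sigma1V tK); split=> //; apply: eval_m1_mx_laurent eval_m1_sigma1V.
- exact: sigma1_row.
- exact: sigma1_col.
Qed.

Lemma burau_sigma2 : burau (sigma2 tK).
Proof.
have [s2V s2V'] := sigma2_inv tK_neq0.
split; last by rewrite barmx_sigma2 J3_burau_form (sigma2_form tK_neq0).
- split; first exact: eval_m1_mx_laurent eval_m1_sigma2.
  by exists (sigma2V tK); split=> //; apply: eval_m1_mx_laurent eval_m1_sigma2V.
- exact: sigma2_row.
- exact: sigma2_col.
Qed.

Lemma burau_sigma1V : burau (sigma1V tK).
Proof.
have [s1V s1V'] := sigma1_inv tK_neq0.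
exact: burau_inv burau_sigma1 (eval_m1_mx_laurent eval_m1_sigma1V) s1V s1V'.
Qed.

Lemma burau_sigma2V : burau (sigma2V tK).
Proof.
have [s2V s2V'] := sigma2_inv tK_neq0.
exact: burau_inv burau_sigma2 (eval_m1_mx_laurent eval_m1_sigma2V) s2V s2V'.
Qed.

Lemma rhoM (B1 B2 : 'M[int]_3) :
  v_m1 *m B1 = v_m1 -> B1 *m ones_int = ones_int ->
  v_m1 *m B2 = v_m1 -> B2 *m ones_int = ones_int ->
  rho (B1 *m B2) = rho B1 *m rho B2.
Proof.
move=> v1 o1 v2 o2; rewrite (int_affineE v1 o1) (int_affineE v2 o2).
move: (ent B1 0 0) (ent B1 0 2) (ent B1 2 0) (ent B1 2 2) => a c e f.
move: (ent B2 0 0) (ent B2 0 2) (ent B2 2 0) (ent B2 2 2) => a' c' e' f'.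
by entrywise; rewrite ent_mulmx // !big_ord_recr big_ord0 /= !ent_rho // ent_mulmx //
  !big_ord_recr big_ord0 /= !ent_seqmx //=; ring.
Qed.

Definition rho_image (M : 'M[int]_2) : Prop :=
  exists A B, [/\ burau A, eval_m1_mx A B & rho B = M].

Lemma rho_imageM M N : rho_image M -> rho_image N -> rho_image (M *m N).
Proof.
move=> [A [B [bA AB <-]]] [C [D [bC CD <-]]].
have [vB B1 _] := burau_eval_m1 bA AB; have [vD D1 _] := burau_eval_m1 bC CD.
by exists (A *m C), (B *m D); split; [apply: burauM | apply: eval_m1_mxM | apply: rhoM].
Qed.

Definition elem_up (n : int) : 'M[int]_2 := seqmx 2 [:: [:: 1; n]; [:: 0; 1]].
Definition elem_lo (n : int) : 'M[int]_2 := seqmx 2 [:: [:: 1; 0]; [:: n; 1]].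

Lemma rho_image_up_N1 : rho_image (elem_up (-1)).
Proof.
exists (sigma1 tK), sigma1_m1; split; [exact: burau_sigma1 | exact: eval_m1_sigma1 |].
by entrywise; rewrite ent_rho // !ent_seqmx.
Qed.

Lemma rho_image_up_1 : rho_image (elem_up 1).
Proof.
exists (sigma1V tK), sigma1V_m1; split; [exact: burau_sigma1V | exact: eval_m1_sigma1V |].
by entrywise; rewrite ent_rho // !ent_seqmx.
Qed.

Lemma rho_image_lo_1 : rho_image (elem_lo 1).
Proof.
exists (sigma2 tK), sigma2_m1; split; [exact: burau_sigma2 | exact: eval_m1_sigma2 |].
by entrywise; rewrite ent_rho // !ent_seqmx.
Qed.

Lemma rho_image_lo_N1 : rho_image (elem_lo (-1)).
Proof.
exists (sigma2V tK), sigma2V_m1; split; [exact: burau_sigma2V | exact: eval_m1_sigma2V |].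
by entrywise; rewrite ent_rho // !ent_seqmx.
Qed.

Lemma rho_image1 : rho_image 1%:M.
Proof.
exists 1%:M, 1%:M; split; [exact: burau1 | exact: eval_m1_mx1 |].
by entrywise; rewrite ent_rho // !ent1.
Qed.

Lemma elem_upD m n : elem_up m *m elem_up n = elem_up (m + n).
Proof. by entrywise_mul; ring. Qed.

Lemma elem_up0 : elem_up 0 = 1%:M.
Proof. by entrywise; rewrite ent_seqmx // ent1 //. Qed.

Lemma rho_image_up n : rho_image (elem_up n).
Proof.
have step k : rho_image (elem_up k) -> rho_image (elem_up (k + 1)) /\ rho_image (elem_up (k - 1)).
  by move=> hk; rewrite -!elem_upD; split; apply: rho_imageM hk _;
    [apply: rho_image_up_1 | apply: rho_image_up_N1].
have nat_case k : rho_image (elem_up k%:Z) /\ rho_image (elem_up (- k%:Z)).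
  elim: k => [|k [IHp IHn]]; first by rewrite oppr0 elem_up0; split; apply: rho_image1.
  by rewrite -addn1 PoszD opprD; split; [apply: (step _ IHp).1 | apply: (step _ IHn).2].
by case: n => k; [apply: (nat_case k).1 | rewrite NegzE; apply: (nat_case k.+1).2].
Qed.

Definition rot : 'M[int]_2 := seqmx 2 [:: [:: 0; -1]; [:: 1; 0]].
Definition rotV : 'M[int]_2 := seqmx 2 [:: [:: 0; 1]; [:: -1; 0]].

Lemma rotV_rot : rotV *m rot = 1%:M.
Proof. by entrywise_mul. Qed.

Lemma rho_image_rot : rho_image rot.
Proof.
have -> : rot = elem_up (-1) *m elem_lo 1 *m elem_up (-1) by entrywise_mul.
exact: rho_imageM (rho_imageM rho_image_up_N1 rho_image_lo_1) rho_image_up_N1.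
Qed.

Lemma rho_image_rotV : rho_image rotV.
Proof.
have -> : rotV = elem_up 1 *m elem_lo (-1) *m elem_up 1 by entrywise_mul.
exact: rho_imageM (rho_imageM rho_image_up_1 rho_image_lo_N1) rho_image_up_1.
Qed.

Lemma rho_image_triangular (M : 'M[int]_2) : \det M = 1 -> ent M 1 0 = 0 -> rho_image M.
Proof.
rewrite det2 => detM c0; rewrite c0 mulr0 subr0 in detM.
have /orP[/eqP d1 | /eqP dN1] := intUnitRing.unitzPl detM.
  have a1 : ent M 0 0 = 1 by rewrite -detM d1 mulr1.
  have -> : M = elem_up (ent M 0 1) by entrywise; rewrite ent_seqmx //= ?a1 ?c0 ?d1.
  exact: rho_image_up.
have aN1 : ent M 0 0 = -1 by rewrite -detM dN1 mulrN1 opprK.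
have -> : M = rot *m rot *m elem_up (- ent M 0 1).
  by entrywise_mul; rewrite ?aN1 ?c0 ?dN1; ring.
exact: rho_imageM (rho_imageM rho_image_rot rho_image_rot) (rho_image_up _).
Qed.

Lemma elem_up_rot_factor (q : int) (M : 'M[int]_2) :
  M = elem_up q *m rotV *m (rot *m elem_up (- q) *m M).
Proof.
by rewrite !mulmxA -(mulmxA _ rotV) rotV_rot mulmx1 elem_upD subrr elem_up0 mul1mx.
Qed.

Lemma det_rot_elem_up (q : int) (M : 'M[int]_2) : \det (rot *m elem_up q *m M) = \det M.
Proof.
have det_rot : \det rot = 1 by rewrite det2 !ent_seqmx.
have det_up : \det (elem_up q) = 1 by rewrite det2 !ent_seqmx //=; ring.
by rewrite !det_mulmx det_rot det_up !mul1r.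
Qed.

Lemma ent_rot_elem_up (q : int) (M : 'M[int]_2) :
  ent (rot *m elem_up (- q) *m M) 1 0 = ent M 0 0 - q * ent M 1 0.
Proof.
by rewrite !ent_mulmx // !big_ord_recr !big_ord0 /= !ent_mulmx // !big_ord_recr !big_ord0 /=
  !ent_seqmx //=; ring.
Qed.

(* Induction on |M 1 0|, following Euclid's algorithm on the first column. *)
Lemma rho_image_SL2 (M : 'M[int]_2) : \det M = 1 -> rho_image M.
Proof.
move: {2}`|ent M 1 0|%N (leqnn `|ent M 1 0|%N) => n.
elim: n M => [|n IHn] M le_c detM.
  by apply: rho_image_triangular => //; apply/eqP; rewrite -absz_eq0 -leqn0.
have [c0 | nz_c] := eqVneq (ent M 1 0) 0; first exact: rho_image_triangular.
set q := (ent M 0 0 %/ ent M 1 0)%Z.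
rewrite (elem_up_rot_factor q M).
apply: rho_imageM; first exact: rho_imageM (rho_image_up q) rho_image_rotV.
apply: IHn; last by rewrite det_rot_elem_up.
have r_ge0 := modz_ge0 (ent M 0 0) nz_c; have r_lt := ltz_mod (ent M 0 0) nz_c.
rewrite ent_rot_elem_up {1}(divz_eq (ent M 0 0) (ent M 1 0)) -/q addrAC mulrC subrr add0r.
move: le_c r_ge0 r_lt; move: (ent M 1 0) ((ent M 0 0) %% _)%Z => c r; lia.
Qed.

Theorem lemma3p10 :
  (forall A : 'M[K]_3, burau A -> exists k : int, \det A = (- tK) ^ k) /\
  (forall (A : 'M[K]_3) (B : 'M[int]_3), burau A -> eval_m1_mx A B ->
     exists M : 'M[int]_2, \det M = 1 /\ proj_eq (rho B) M) /\
  (forall M : 'M[int]_2, \det M = 1 ->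
     exists (A : 'M[K]_3) (B : 'M[int]_3),
       [/\ burau A, eval_m1_mx A B & proj_eq (rho B) M]).
Proof.
have proj_eq_refl M : proj_eq M M by exists 1; rewrite oner_neq0 scale1r.
split; first exact: burau_det.
split=> [A B bA AB | M detM].
  by exists (rho B); split; [apply: int_burau_rho_det (burau_eval_m1 bA AB) | apply: proj_eq_refl].
have [A [B [bA AB <-]]] := rho_image_SL2 detM.
by exists A, B; split; last apply: proj_eq_refl.
Qed.
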